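(* $\beta_2\geqslant\sqrt{7}$. More precisely, there exists a set $P$ of $19$ points in the Euclidean plane such that the largest edge-length of a bottleneck spanning tree of $P$ equals $1$, while every Hamiltonian path on $P$ (i.e., every spanning tree of $P$ of maximum degree at most $2$) has an edge of length at least $\sqrt{7}$.
   Context: For a finite point set $P$ in the plane, consider the complete graph on $P$ with edge weights equal to Euclidean distances. A bottleneck spanning tree (BST) of $P$ is a spanning tree minimizing the largest edge-length. For an integer $K\geqslant 2$, a bottleneck degree-$K$ spanning tree is a spanning tree of maximum degree at most $K$ minimizing the largest edge-length. $\beta_K$ denotes the supremum, over all finite point sets in the Euclidean plane, of the ratio of the largest edge-length of a bottleneck degree-$K$ spanning tree to the largest edge-length of a BST. *)

From Stdlib Require Import Reals.
From mathcomp Require Import all_boot.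

Set Implicit Arguments.
Unset Strict Implicit.
Unset Printing Implicit Defensive.

Definition pt : Type := (R * R)%type.

Definition eucl_dist (p q : pt) : R :=
  sqrt (Rplus (Rmult (Rminus (fst p) (fst q)) (Rminus (fst p) (fst q)))
              (Rmult (Rminus (snd p) (snd q)) (Rminus (snd p) (snd q)))).

(* A graph on the vertex set 'I_n is a set of undirected edges, each edge
   being a 2-element subset of 'I_n. *)
Definition adj n (E : {set {set 'I_n}}) : rel 'I_n :=
  fun u v => [set u; v] \in E.

Definition deg n (E : {set {set 'I_n}}) (v : 'I_n) : nat :=
  #|[set e in E | v \in e]|.

Definition spanning_tree n (E : {set {set 'I_n}}) : Prop :=
  [/\ (forall e, e \in E -> #|e| = 2),
      #|E| = n.-1
    & forall u v : 'I_n, connect (adj E) u v].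

Definition max_edge_len n (P : 'I_n -> pt) (E : {set {set 'I_n}}) : R :=
  \big[Rmax/R0]_(u <- enum 'I_n)
     \big[Rmax/R0]_(v <- enum 'I_n | adj E u v) eucl_dist (P u) (P v).

Definition is_BST n (P : 'I_n -> pt) (E : {set {set 'I_n}}) : Prop :=
  spanning_tree E /\
  forall E' : {set {set 'I_n}}, spanning_tree E' -> Rle (max_edge_len P E) (max_edge_len P E').

(* The 19 points are the centre of the triangular lattice together with three
   congruent arms of six points, rotated by 120 degrees.  Squared lattice
   distances a^2 + ab + b^2 are positive integers, so distinct points are at
   distance at least 1, and the 18 unit-length steps along the arms form a
   spanning tree: the bottleneck is 1.
   Call an edge short if its squared length is below 7.  Each arm ends in a
   fork x with two prongs m-t and mm-tt whose tips t, tt have no short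
   neighbours besides x and their own prong.  If m, t, mm, tt all had
   degree 2 in a Hamiltonian path with short edges, t and tt would saturate
   x, and the remaining edges would close up a connected component of at
   most six arm points, missing the centre.  So every arm contains an
   endpoint of the path, which makes three endpoints; but degree counting
   allows a path only two. *)

From Stdlib Require Import Reals Lra ZArith Classical.
From mathcomp Require Import all_boot zify.

Set Implicit Arguments.
Unset Strict Implicit.
Unset Printing Implicit Defensive.

Section Set2.
Variable T : finType.
Implicit Types (A : {set T}) (a b : T).

Lemma set2_of_sub A a b : {subset A <= [:: a; b]} -> #|A| = 2 -> A = [set a; b].
Proof.
move=> sub_ab card_A; apply/eqP; rewrite eqEcard card_A cards2 ltnS leq_b1 andbT.
by apply/subsetP => z /sub_ab; rewrite !inE.
Qed.

Lemma set2_of_sup A a b : a != b -> a \in A -> b \in A -> #|A| <= 2 -> A = [set a; b].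
Proof.
move=> ab aA bA card_A; apply/esym/eqP; rewrite eqEcard cards2 ab card_A andbT.
by rewrite subUset !sub1set aA bA.
Qed.

End Set2.

Section Graph.
Variables (n : nat) (E : {set {set 'I_n}}).
Hypothesis edge2 : forall e, e \in E -> #|e| = 2.

Definition nbhd (v : 'I_n) : {set 'I_n} := [set z | adj E v z].

Lemma adjC u v : adj E u v = adj E v u.
Proof. by rewrite /adj setUC. Qed.

Lemma nbhdC u v : (u \in nbhd v) = (v \in nbhd u).
Proof. by rewrite !inE adjC. Qed.

Lemma adjnn v : ~~ adj E v v.
Proof. by apply/negP => /edge2; rewrite setUid cards1. Qed.

Lemma deg_nbhd v : deg E v = #|nbhd v|.
Proof.
have edges_at_v : [set e in E | v \in e] = [set [set v; z] | z in nbhd v].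
  apply/setP => e; rewrite inE; apply/andP/imsetP => [[eE ve]|[z vz ->]].
    have /cards2P[a [b [_ e_ab]]] : #|e| == 2 by rewrite edge2.
    subst e; move: ve; rewrite !inE => /orP[]/eqP->.
      by exists b; rewrite // inE /adj.
    by exists a; [rewrite inE /adj setUC | rewrite setUC].
  by move: vz; rewrite !inE eqxx.
rewrite /deg edges_at_v card_in_imset // => z1 z2 vz1 _ e12.
have : z1 \in [set v; z2] by rewrite -e12 !inE eqxx orbT.
rewrite !inE => /orP[/eqP z1v|/eqP //].
by move: vz1; rewrite z1v inE (negbTE (adjnn v)).
Qed.

Lemma sum_deg : \sum_(v : 'I_n) deg E v = 2 * #|E|.
Proof.
have deg_sum v : deg E v = \sum_(e in E) (v \in e : nat).
  rewrite /deg -sum1_card big_mkcond [RHS]big_mkcond /=.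
  by apply: eq_bigr => e _; rewrite inE; case: (e \in E); case: (v \in e).
under eq_bigr do rewrite deg_sum.
rewrite exchange_big /= mulnC -sum_nat_const.
apply: eq_bigr => e eE; rewrite -(edge2 eE) -sum1_card [RHS]big_mkcond /=.
by apply: eq_bigr => v _; case: (v \in e).
Qed.

Lemma size_leaves_le2 (s : seq 'I_n) :
  #|E| = n.-1 -> (forall v, deg E v <= 2) ->
  uniq s -> all (fun v => deg E v <= 1) s -> size s <= 2.
Proof.
move=> card_E deg_le2 s_uniq s_leaves.
have : \sum_(v : 'I_n) (deg E v + (v \in s)) <= \sum_(v : 'I_n) 2.
  apply: leq_sum => v _; case: (boolP (v \in s)) => [vs|_]; last by rewrite addn0.
  by rewrite addn1 ltnS (allP s_leaves).
rewrite big_split /= sum_deg card_E sum_nat_const card_ord.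
have -> : \sum_(v < n) (v \in s : nat) = size s.
  by rewrite -(card_uniqP s_uniq) -sum1_card [RHS]big_mkcond.
lia.
Qed.

Lemma closed_connect_in (C : {set 'I_n}) u v :
  {in C, forall w, nbhd w \subset C} -> connect (adj E) u v -> u \in C -> v \in C.
Proof.
move=> closedC /connectP[p + ->]; elim: p u => //= w p IH u /andP[uw wp] uC.
by apply: IH wp (subsetP (closedC u uC) w _); rewrite inE.
Qed.

Lemma fork_has_endpoint (r y x m t mm tt : 'I_n) :
  (forall u v, connect (adj E) u v) -> (forall v, deg E v <= 2) ->
  r \notin [:: y; x; m; t; mm; tt] -> uniq [:: m; t; mm; tt] ->
  {subset nbhd t <= [:: x; m]} -> {subset nbhd tt <= [:: x; mm]} ->
  {subset nbhd m <= [:: y; x; t; mm]} -> {subset nbhd mm <= [:: y; x; tt; m]} ->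
  has (fun v => deg E v <= 1) [:: m; t; mm; tt].
Proof.
move=> conn deg_le2 r_out tips_uniq Nt_sub Ntt_sub Nm_sub Nmm_sub.
have le2 v : #|nbhd v| <= 2 by rewrite -deg_nbhd.
have nbhd2 v : ~~ (deg E v <= 1) -> #|nbhd v| = 2.
  by move=> deg_gt1; apply/eqP; rewrite eqn_leq le2 -deg_nbhd ltnNge.
apply: contraT; rewrite -all_predC /=.
move=> /and5P[/nbhd2 Nm2 /nbhd2 Nt2 /nbhd2 Nmm2 /nbhd2 Ntt2 _].
move: tips_uniq; rewrite /= !inE !negb_or -!andbA.
move=> /and5P[m_t m_mm m_tt t_mm /and3P[t_tt mm_tt _]].
have Nt := set2_of_sub Nt_sub Nt2.
have Ntt := set2_of_sub Ntt_sub Ntt2.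
have Nx : nbhd x = [set t; tt].
  by apply: set2_of_sup t_tt _ _ (le2 x); rewrite nbhdC ?Nt ?Ntt set21.
have xNm : x \notin nbhd m by rewrite nbhdC Nx !inE (negbTE m_t) (negbTE m_tt).
have xNmm : x \notin nbhd mm.
  by rewrite nbhdC Nx !inE (eq_sym mm) (negbTE t_mm) (negbTE mm_tt).
have tNm : t \in nbhd m by rewrite nbhdC Nt set22.
have ttNmm : tt \in nbhd mm by rewrite nbhdC Ntt set22.
suff [C [xC rC closedC]] : exists C : {set 'I_n},
    [/\ x \in C, r \notin C & {in C, forall w, nbhd w \subset C}].
  by rewrite (closed_connect_in closedC (conn x r) xC) in rC.
have closed_of_seq (s : seq 'I_n) : all (fun w => nbhd w \subset [set z in s]) s ->
    {in [set z in s], forall w, nbhd w \subset [set z in s]}.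
  by move=> /allP closed_s w; rewrite inE => /closed_s.
have [mmNm | mmNm] := boolP (mm \in nbhd m).
  have Nm : nbhd m = [set t; mm] := set2_of_sup t_mm tNm mmNm (le2 m).
  have Nmm : nbhd mm = [set m; tt].
    by apply: set2_of_sup m_tt _ ttNmm (le2 mm); rewrite nbhdC.
  exists [set z in [:: x; m; t; mm; tt]]; split.
  - by rewrite inE mem_head.
  - by rewrite inE; apply: contra r_out; apply: (@mem_behead _ (y :: _)).
  - apply: closed_of_seq; rewrite /= Nx Nm Nt Nmm Ntt.
    by rewrite !subUset !sub1set !inE !eqxx !orbT.
have drop2 (A : {set 'I_n}) a b c d :
    {subset A <= [:: a; b; c; d]} -> b \notin A -> d \notin A -> {subset A <= [:: a; c]}.
  move=> A_sub bA dA z zA; move: (A_sub z zA); rewrite !inE.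
  case/or4P=> /eqP z_eq; subst z; rewrite ?eqxx ?orbT //.
    by rewrite zA in bA.
  by rewrite zA in dA.
have Nm : nbhd m = [set y; t] := set2_of_sub (drop2 _ _ _ _ _ Nm_sub xNm mmNm) Nm2.
have mNmm : m \notin nbhd mm by rewrite nbhdC.
have Nmm : nbhd mm = [set y; tt] := set2_of_sub (drop2 _ _ _ _ _ Nmm_sub xNmm mNmm) Nmm2.
have Ny : nbhd y = [set m; mm].
  by apply: set2_of_sup m_mm _ _ (le2 y); rewrite nbhdC ?Nm ?Nmm set21.
exists [set z in [:: y; x; m; t; mm; tt]]; split.
- by rewrite !inE eqxx orbT.
- by rewrite inE.
- apply: closed_of_seq; rewrite /= Ny Nx Nm Nt Nmm Ntt.
  by rewrite !subUset !sub1set !inE !eqxx !orbT.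
Qed.

End Graph.

Section ParentTree.
Variables (n : nat) (root : 'I_n) (par : 'I_n -> 'I_n) (rank : 'I_n -> nat).
Hypothesis rank_par : forall v, v != root -> rank (par v) < rank v.

Definition parent_tree : {set {set 'I_n}} := [set [set v; par v] | v in [set~ root]].

Lemma par_neq v : v != root -> par v != v.
Proof. by move=> /rank_par; apply: contraTneq => ->; rewrite ltnn. Qed.

Lemma parent_tree_edge2 e : e \in parent_tree -> #|e| = 2.
Proof. by case/imsetP=> v; rewrite !inE => /par_neq v_par ->; rewrite cards2 eq_sym v_par. Qed.

Lemma adj_parent_tree v : v != root -> adj parent_tree v (par v).
Proof. by move=> v_root; apply: imset_f; rewrite !inE. Qed.

Lemma adj_parent_treeP u v :
  adj parent_tree u v -> (u != root /\ v = par u) \/ (v != root /\ u = par v).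
Proof.
move=> uv; have u_v : u != v.
  by apply: contraNneq (adjnn parent_tree_edge2 v) => u_v; rewrite -{1}u_v.
case/imsetP: uv => w; rewrite !inE => w_root uv_w.
have : u \in [set w; par w] by rewrite -uv_w set21.
have : v \in [set w; par w] by rewrite -uv_w set22.
rewrite !inE => /orP[]/eqP v_w /orP[]/eqP u_w; subst u v; rewrite ?eqxx in u_v.
all: by [right | left].
Qed.

Lemma connect_root v : connect (adj parent_tree) v root.
Proof.
have [k] := ubnP (rank v); elim: k v => // k IH v rank_v.
have [-> | v_root] := eqVneq v root; first exact: connect0.
apply: connect_trans (connect1 (adj_parent_tree v_root)) (IH _ _).
exact: leq_trans (rank_par v_root) rank_v.
Qed.

Lemma parent_tree_spanning : spanning_tree parent_tree.
Proof.
split; first exact: parent_tree_edge2.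
  rewrite card_in_imset ?cardsC1 ?card_ord // => v w; rewrite !inE => v_root w_root vw.
  have : v \in [set w; par w] by rewrite -vw set21.
  have : w \in [set v; par v] by rewrite vw set21.
  rewrite !inE => /orP[/eqP -> //|/eqP w_par] /orP[/eqP // |/eqP v_par].
  by move: (rank_par v_root) (rank_par w_root); rewrite -w_par -v_par; lia.
move=> u v; have sym : connect_sym (adj parent_tree) by apply: sym_connect_sym; apply: adjC.
by apply: connect_trans (connect_root u) _; rewrite sym connect_root.
Qed.

End ParentTree.

Section Euclid.
Local Open Scope R_scope.

Lemma big_Rmax_le (I : Type) (r : seq I) (Pr : pred I) (F : I -> R) c :
  0 <= c -> (forall i, Pr i -> F i <= c) -> \big[Rmax/0]_(i <- r | Pr i) F i <= c.
Proof.
move=> c_ge0 F_le; apply: (big_ind (fun x => x <= c)) => // x y; exact: Rmax_lub.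
Qed.

Lemma le_big_Rmax (I : eqType) (r : seq I) (Pr : pred I) (F : I -> R) i :
  i \in r -> Pr i -> F i <= \big[Rmax/0]_(j <- r | Pr j) F j.
Proof.
elim: r => // j r IH; rewrite inE big_cons => /orP[/eqP <- ->|i_r Pr_i].
  exact: Rmax_l.
by case: (Pr j); [apply: Rle_trans (IH i_r Pr_i) (Rmax_r _ _) | apply: IH].
Qed.

Lemma max_edge_len_le n (P : 'I_n -> pt) E c :
  0 <= c -> (forall u v, adj E u v -> eucl_dist (P u) (P v) <= c) -> max_edge_len P E <= c.
Proof.
move=> c_ge0 short; apply: big_Rmax_le => // u _.
by apply: big_Rmax_le => // v; apply: short.
Qed.

Lemma le_max_edge_len n (P : 'I_n -> pt) E u v :
  adj E u v -> eucl_dist (P u) (P v) <= max_edge_len P E.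
Proof.
move=> uv.
apply: (Rle_trans _ (\big[Rmax/0]_(w <- enum 'I_n | adj E u w) eucl_dist (P u) (P w))).
  exact: le_big_Rmax (mem_enum _ v) uv.
by apply: (@le_big_Rmax _ _ _ (fun u => \big[Rmax/0]_(w <- enum 'I_n | adj E u w)
                                            eucl_dist (P u) (P w))); rewrite ?mem_enum.
Qed.

Lemma le_max_edge_len_sep n (P : 'I_n -> pt) E d :
  (1 < n)%N -> spanning_tree E ->
  (forall u v, u != v -> d <= eucl_dist (P u) (P v)) -> d <= max_edge_len P E.
Proof.
move=> n_gt1 [edge2 card_E _] sep.
have : E != set0 by rewrite -card_gt0 card_E; lia.
case/set0Pn=> e eE; have /cards2P[u [v [uv e_uv]]] : #|e| == 2%N by rewrite edge2.
by apply: Rle_trans (sep u v uv) (le_max_edge_len _ _); rewrite /adj -e_uv.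
Qed.

Lemma eucl_distC p q : eucl_dist p q = eucl_dist q p.
Proof. by rewrite /eucl_dist; f_equal; ring. Qed.

Lemma eucl_dist_xx p : eucl_dist p p = 0.
Proof. by rewrite /eucl_dist !Rminus_diag Rmult_0_l Rplus_0_l sqrt_0. Qed.

(* The lattice point a + b w with w = exp (i pi / 3). *)
Definition tri_pt (a b : Z) : pt := (IZR a + IZR b / 2, IZR b * sqrt 3 / 2).

Definition tri_norm (a b : Z) : Z := (a * a + a * b + b * b)%Z.

Lemma dist_tri_pt a b a' b' :
  eucl_dist (tri_pt a b) (tri_pt a' b') = sqrt (IZR (tri_norm (a - a') (b - b'))).
Proof.
rewrite /eucl_dist /tri_pt /tri_norm /=; f_equal.
have sqrt3_sq : sqrt 3 * sqrt 3 = 3 by apply: sqrt_sqrt; lra.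
rewrite !plus_IZR !mult_IZR !minus_IZR.
set s := sqrt 3 in sqrt3_sq *.
have -> : (IZR b * s / 2 - IZR b' * s / 2) * (IZR b * s / 2 - IZR b' * s / 2)
          = s * s * ((IZR b - IZR b') * (IZR b - IZR b') / 4) by field.
by rewrite sqrt3_sq; field.
Qed.
End Euclid.

Lemma all_iota_ord n (Q : pred nat) : all Q (iota 0 n) -> forall i : 'I_n, Q i.
Proof. by move=> /allP all_Q i; apply: all_Q; rewrite mem_iota ltn_ord. Qed.

(* Point 0 is the centre; for b = 1, 7, 13 the arm b, ..., b + 5 plays the
   roles y, x, m, t, mm, tt of [fork_has_endpoint], with parents given by
   [parents] below. *)
Definition coords : seq (Z * Z) :=
  [:: (0, 0);
      (1, 0); (2, 0); (2, 1); (2, 2); (3, -1); (4, -2);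
      (-1, 1); (-2, 2); (-3, 2); (-4, 2); (-2, 3); (-2, 4);
      (0, -1); (0, -2); (1, -3); (2, -4); (-1, -2); (-2, -2)]%Z.

Definition coord (i : nat) : Z * Z := nth (0, 0)%Z coords i.

Definition P19 (i : 'I_19) : pt := tri_pt (coord i).1 (coord i).2.

Definition sqdist (i j : nat) : Z :=
  tri_norm ((coord i).1 - (coord j).1) ((coord i).2 - (coord j).2).

Definition vtx (k : nat) : 'I_19 := inord k.

Lemma vtxK k : (k < 19)%N -> vtx k = k :> nat.
Proof. exact: inordK. Qed.

Lemma dist_P19 u v : eucl_dist (P19 u) (P19 v) = sqrt (IZR (sqdist u v)).
Proof. exact: dist_tri_pt. Qed.

Lemma sqdist_ge1 (u v : 'I_19) : u != v -> (1 <= sqdist u v)%Z.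
Proof.
have sep : all (fun i => all (fun j => (i == j) || (1 <=? sqdist i j)%Z) (iota 0 19))
               (iota 0 19) by [].
move=> uv; move: (all_iota_ord (all_iota_ord sep u) v).
by rewrite val_eqE (negbTE uv) => /Z.leb_spec0.
Qed.

Definition parents : seq nat :=
  [:: 0; 0; 1; 2; 3; 2; 5; 0; 7; 8; 9; 8; 11; 0; 13; 14; 15; 14; 17].

Definition par19 (v : 'I_19) : 'I_19 := vtx (nth 0 parents v).

Lemma par19_spec v : v != ord0 -> par19 v < v /\ sqdist v (par19 v) = 1%Z.
Proof.
have unit_steps : all (fun k => (k == 0) ||
    (nth 0 parents k < k) && Z.eqb (sqdist k (nth 0 parents k)) 1) (iota 0 19) by [].
move=> v0; move: (all_iota_ord unit_steps v); rewrite (negbTE (v0 : val v != 0)) /=.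
move=> /andP[par_lt /Z.eqb_spec sqdist1].
have par_val : par19 v = nth 0 parents v :> nat by rewrite vtxK // (ltn_trans par_lt).
by rewrite par_val.
Qed.

Lemma par19_lt v : v != ord0 -> par19 v < v.
Proof. by case/par19_spec. Qed.

Definition tree19 : {set {set 'I_19}} := parent_tree ord0 par19.

Lemma tree19_spanning : spanning_tree tree19.
Proof. exact: parent_tree_spanning par19_lt. Qed.

Section Config19.
Local Open Scope R_scope.

Lemma P19_sep u v : u != v -> 1 <= eucl_dist (P19 u) (P19 v).
Proof. by move=> /sqdist_ge1 uv; rewrite dist_P19 -sqrt_1; apply/sqrt_le_1_alt/IZR_le. Qed.

Lemma P19_inj : injective P19.
Proof.
move=> u v Puv; have [// | uv] := eqVneq u v.
by have := P19_sep uv; rewrite Puv eucl_dist_xx; lra.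
Qed.

Lemma max_edge_len_tree19 : max_edge_len P19 tree19 = 1.
Proof.
apply: Rle_antisym.
  apply: max_edge_len_le => [|u v /(adj_parent_treeP par19_lt)[[u0 ->]|[v0 ->]]]; first lra.
    by rewrite dist_P19 (par19_spec u0).2 sqrt_1; lra.
  by rewrite eucl_distC dist_P19 (par19_spec v0).2 sqrt_1; lra.
exact: le_max_edge_len_sep tree19_spanning P19_sep.
Qed.

Lemma tree19_BST : is_BST P19 tree19.
Proof.
split=> [|E E_tree]; first exact: tree19_spanning.
by rewrite max_edge_len_tree19; apply: le_max_edge_len_sep E_tree P19_sep.
Qed.

End Config19.

Definition near_only (w : nat) (s : seq nat) : bool :=
  all (fun k => (sqdist w k <? 7)%Z ==> (k \in w :: s)) (iota 0 19).

Lemma nbhd_sub_near_only (E : {set {set 'I_19}}) w s :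
  (forall e, e \in E -> #|e| = 2) ->
  (forall u v : 'I_19, adj E u v -> (sqdist u v < 7)%Z) ->
  w < 19 -> near_only w s -> {subset nbhd E (vtx w) <= map vtx s}.
Proof.
move=> edge2 short w19 near_w z; rewrite inE => wz.
move: (all_iota_ord near_w z) (short _ _ wz); rewrite vtxK //.
move=> /implyP near_z /Z.ltb_spec0 /near_z; rewrite inE => /orP[/eqP z_w | z_s].
  by move: wz; rewrite -z_w [vtx _]inord_val (negbTE (adjnn edge2 z)).
by rewrite -(inord_val z) map_f.
Qed.

Lemma arm_has_endpoint (E : {set {set 'I_19}}) b :
  spanning_tree E -> (forall v, deg E v <= 2) ->
  (forall u v : 'I_19, adj E u v -> (sqdist u v < 7)%Z) ->
  b \in [:: 1; 7; 13] -> exists2 v : 'I_19, deg E v <= 1 & b + 2 <= v <= b + 5.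
Proof.
move=> [edge2 _ conn] deg_le2 short b_arm.
have arms : all (fun b => [&& near_only (b + 3) [:: b + 1; b + 2],
                             near_only (b + 5) [:: b + 1; b + 4],
                             near_only (b + 2) [:: b; b + 1; b + 3; b + 4]
                           & near_only (b + 4) [:: b; b + 1; b + 5; b + 2]]) [:: 1; 7; 13].
  by [].
have /and4P[near_t near_tt near_m near_mm] := allP arms b b_arm.
have [b_gt0 b_lt] : 0 < b /\ b + 5 < 19 by move: b_arm; rewrite !inE => /or3P[]/eqP->.
have lt19 k : k <= 5 -> b + k < 19 by lia.
have sub_near := nbhd_sub_near_only edge2 short.
have /hasP[v v_arm leaf] :
    has (fun v => deg E v <= 1) [:: vtx (b + 2); vtx (b + 3); vtx (b + 4); vtx (b + 5)].
  apply: (fork_has_endpoint edge2 conn deg_le2 (r := vtx 0) (y := vtx b) (x := vtx (b + 1))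
           _ _ (sub_near _ _ (lt19 3 isT) near_t) (sub_near _ _ (lt19 5 isT) near_tt)
           (sub_near _ _ (lt19 2 isT) near_m) (sub_near _ _ (lt19 4 isT) near_mm));
  by rewrite -?(mem_map val_inj) -?(map_inj_uniq val_inj) /= !vtxK; rewrite ?inE; lia.
exists v => //; move: v_arm.
by rewrite -(mem_map val_inj) /= !vtxK; rewrite ?inE; lia.
Qed.

Lemma path_has_long_edge (E : {set {set 'I_19}}) :
  spanning_tree E -> (forall v, deg E v <= 2) ->
  exists u v, adj E u v /\ (7 <= sqdist u v)%Z.
Proof.
move=> E_tree deg_le2; apply: NNPP => no_long.
have short u v : adj E u v -> (sqdist u v < 7)%Z.
  by move=> uv; apply/Z.nle_gt => long; apply: no_long; exists u, v.
have endpoint b := arm_has_endpoint (b := b) E_tree deg_le2 short.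
have [v1 leaf1 arm1] := endpoint 1 isT.
have [v7 leaf7 arm7] := endpoint 7 isT.
have [v13 leaf13 arm13] := endpoint 13 isT.
have [edge2 card_E _] := E_tree.
suff : size [:: v1; v7; v13] <= 2 by [].
apply: (size_leaves_le2 edge2 card_E deg_le2); last by rewrite /= leaf1 leaf7 leaf13.
by rewrite /= !inE -!val_eqE /=; lia.
Qed.

Theorem mainTheorem3 :
  exists P : 'I_19 -> pt,
    injective P /\
    (exists E, is_BST P E /\ max_edge_len P E = R1) /\
    (forall E : {set {set 'I_19}},
        spanning_tree E -> (forall v, deg E v <= 2) ->
        exists u v, adj E u v /\ Rle (sqrt (INR 7)) (eucl_dist (P u) (P v))).
Proof.
exists P19; split; first exact: P19_inj.
split; first by exists tree19; split; [exact: tree19_BST | exact: max_edge_len_tree19].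
move=> E E_tree deg_le2; have [u [v [uv long]]] := path_has_long_edge E_tree deg_le2.
exists u, v; split => //; rewrite dist_P19 INR_IZR_INZ.
exact/sqrt_le_1_alt/IZR_le.
Qed.
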